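(* Let $p$ be a polynomial of degree at most $2$, $s$ a polynomial of degree at most $1$, and $\eta$ a polynomial of degree exactly $1$ with root $\xi$. Put $$\kappa_0=p(\xi)\eta''(\xi)+\tfrac12p'(\xi)\eta'(\xi)-s(\xi)\eta'(\xi),\qquad \kappa_1=2p(\xi)\eta'(\xi),$$ and assume $(\kappa_0,\kappa_1)\neq(0,0)$. Let $\widehat T$ be the natural-form operator $$\widehat T[y]=p\,y''+\Big(\frac{p'}{2}+s-\frac{2p\eta'}{\eta}\Big)y'+\Big(\frac{p\eta''}{\eta}+\Big(\frac{p'}{2}-s\Big)\frac{\eta'}{\eta}\Big)y,$$ and suppose there is $d\in\{0,1\}$ such that for each $j\in\mathbb N_0\setminus\{d\}$ there is a polynomial eigenfunction $\widehat y_j$ of $\widehat T$ of degree exactly $j$. For $n\ge1$ let $\mathcal E_n=\operatorname{span}\{\widehat y_j: 0\le j\le n,\ j\neq d\}$ and $$\mathcal F_n=\{P\in\mathcal P_n:\ \kappa_1P'(\xi)-\kappa_0P(\xi)=0\},$$ where $\mathcal P_n$ is the space of (real) polynomials of degree at most $n$. Then $\mathcal E_n=\mathcal F_n$ for all $n\ge1$.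
   Context: The condition $\kappa_1P'(\xi)-\kappa_0P(\xi)=0$, i.e. $\big[2p\eta'P'-\big(p\eta''+\tfrac12p'\eta'-s\eta'\big)P\big]\big|_{x=\xi}=0$, is called the exceptional condition, and $\xi$ the exceptional root. This is the $X_1$ (codimension one) situation, covering the $X_1$ Laguerre polynomials of Types I, II (missing degree $d=0$), Type III (missing degree $d=1$), and the $X_1$ Jacobi polynomials ($d=0$). *)

From HB Require Import structures.
From mathcomp Require Import all_boot all_order all_algebra.
Set Implicit Arguments. Unset Strict Implicit. Unset Printing Implicit Defensive.
Import Order.TTheory GRing.Theory Num.Theory.
Local Open Scope ring_scope.

Definition kappa0 (R : realFieldType) (p s eta : {poly R}) (xi : R) : R :=
  p.[xi] * (eta^`(2)).[xi] + (p^`()).[xi] / 2 * (eta^`()).[xi]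
  - s.[xi] * (eta^`()).[xi].

Definition kappa1 (R : realFieldType) (p eta : {poly R}) (xi : R) : R :=
  2 * p.[xi] * (eta^`()).[xi].

(* The natural-form operator T^[y], evaluated at a point x (meaningful where
   eta(x) <> 0). *)
Definition That (R : realFieldType) (p s eta y : {poly R}) (x : R) : R :=
  p.[x] * (y^`(2)).[x]
  + ((p^`()).[x] / 2 + s.[x] - 2 * p.[x] * (eta^`()).[x] / eta.[x]) * (y^`()).[x]
  + (p.[x] * (eta^`(2)).[x] / eta.[x]
     + ((p^`()).[x] / 2 - s.[x]) * (eta^`()).[x] / eta.[x]) * y.[x].

Definition is_eigenfun (R : realFieldType) (p s eta y : {poly R}) : Prop :=
  exists lambda : R, forall x : R, eta.[x] != 0 -> That p s eta y x = lambda * y.[x].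

Definition in_En (R : realFieldType) (yh : nat -> {poly R}) (d n : nat)
  (P : {poly R}) : Prop :=
  exists c : nat -> R, P = \sum_(j < n.+1 | (j : nat) != d) c j *: yh j.

Definition in_Fn (R : realFieldType) (p s eta : {poly R}) (xi : R) (n : nat)
  (P : {poly R}) : Prop :=
  (size P <= n.+1)%N /\ kappa1 p eta xi * (P^`()).[xi] - kappa0 p s eta xi * P.[xi] = 0.

From HB Require Import structures.
From mathcomp Require Import all_boot all_order all_algebra ring.
Import Order.TTheory GRing.Theory Num.Theory.
Local Open Scope ring_scope.
Set Implicit Arguments. Unset Strict Implicit.

(* Writing eta = c (X - xi), the eigen-equation T^[y] = lambda y multiplied by
   (X - xi) is a polynomial identity on the complement of xi, hence everywhere;
   evaluated at xi it is exactly the exceptional condition.  So every eigenfunction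
   lies in F_n, and E_n, being spanned by them, is contained in F_n.  Conversely
   the degrees j <> d of the eigenfunctions form a triangular system, so any P in
   P_n is a combination of them up to a remainder of degree at most d; the
   exceptional condition on that remainder, together with (kappa0, kappa1) <> 0
   and the condition satisfied by the eigenfunction of degree 1 - d, forces the
   remainder to be a multiple of that eigenfunction (zero when d = 0). *)

Lemma poly_eq0_off_point (R : numDomainType) (G : {poly R}) (xi : R) :
  (forall x, x != xi -> G.[x] = 0) -> G = 0.
Proof.
move=> G0; pose rs := [seq xi + i.+1%:R | i <- iota 0 (size G)].
apply: (@roots_geq_poly_eq0 _ _ rs); last by rewrite size_map size_iota.
- apply/allP => _ /mapP[i _ ->]; apply/rootP/G0.
  by rewrite -subr_eq0 addrC addKr pnatr_eq0.
- by rewrite map_inj_uniq ?iota_uniq // => i j /addrI/eqP; rewrite eqr_nat => /eqP[].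
Qed.

Lemma size_leq_of_coef0 (R : nzSemiRingType) (q : {poly R}) (m : nat) :
  (size q <= m.+1)%N -> q`_m = 0 -> (size q <= m)%N.
Proof.
move=> /leq_sizeP qm qm0; apply/leq_sizeP => j.
by rewrite leq_eqVlt => /orP[/eqP<- // | /qm].
Qed.

Lemma coef_size_pred_neq0 (R : nzSemiRingType) (q : {poly R}) (m : nat) :
  size q = m.+1 -> q`_m != 0.
Proof.
by move=> qm; have := lead_coef_eq0 q; rewrite lead_coefE qm -size_poly_eq0 qm => ->.
Qed.

Lemma horner_deriv_size2 (R : comNzRingType) (q : {poly R}) (x : R) :
  (size q <= 2)%N -> (q^`()).[x] = q`_1.
Proof.
move=> /leq_sizeP q2.
have /size1_polyC-> : (size q^`() <= 1)%N.
  by apply/leq_sizeP => j j1; rewrite coef_deriv q2 ?mul0rn.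
by rewrite hornerC coef_deriv.
Qed.

Lemma size2_root_scaleXsubC (R : idomainType) (eta : {poly R}) (xi : R) :
  size eta = 2%N -> root eta xi -> exists2 c, c != 0 & eta = c *: ('X - xi%:P).
Proof.
move=> eta2 /factor_theorem[q eta_q].
have q0 : q != 0 by apply: contra_eq_neq eta2 => q0; rewrite eta_q q0 mul0r size_poly0.
move: eta2; rewrite eta_q size_Mmonic ?monicXsubC // size_XsubC addn2 => -[/eqP].
by case/size_poly1P => c c0 ->; exists c; rewrite // mul_polyC.
Qed.

Section ExceptionalForm.
Variables (R : comNzRingType) (k0 k1 xi : R).

Definition exc_form (P : {poly R}) : R^o := k1 * (P^`()).[xi] - k0 * P.[xi].

Fact exc_form_is_linear : linear exc_form.
Proof.
by move=> a P Q; rewrite /exc_form derivD derivZ !hornerE /= [a *: _]/GRing.scale /=; ring.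
Qed.

HB.instance Definition _ :=
  GRing.isLinear.Build R {poly R} R^o _ exc_form exc_form_is_linear.

Lemma exc_formC (b : R) : exc_form b%:P = - (k0 * b).
Proof. by rewrite /exc_form derivC horner0 hornerC mulr0 sub0r. Qed.

End ExceptionalForm.

Lemma eigenfun_exc_form (R : realFieldType) (p s eta y : {poly R}) (xi c : R) :
  c != 0 -> eta = c *: ('X - xi%:P) -> is_eigenfun p s eta y ->
  exc_form (kappa0 p s eta xi) (kappa1 p eta xi) xi y = 0.
Proof.
move=> c0 eta_c [lam eig].
have eta1 : eta^`() = c%:P by rewrite eta_c derivZ derivXsubC alg_polyC.
have eta2 : eta^`(2) = 0 by rewrite derivSn eta1 /= derivC.
(* G is (X - xi) (T^[y] - lam y) with its apparent pole at xi cleared. *)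
pose G := ('X - xi%:P) * (p * y^`(2) + (2^-1 *: p^`() + s) * y^`() - lam *: y)
  - 2 *: (p * y^`()) + (2^-1 *: p^`() - s) * y.
have G0 : G = 0.
  apply: (poly_eq0_off_point (xi := xi)) => x x_xi.
  have x_xi0 : x - xi != 0 by rewrite subr_eq0.
  have eta_x : eta.[x] != 0 by rewrite eta_c hornerZ hornerXsubC mulf_neq0.
  have eig_x := eig x eta_x; rewrite /That eta1 eta2 eta_c !hornerE in eig_x.
  move/(congr1 (fun t => (x - xi) * (t - lam * y.[x]))): eig_x.
  rewrite subrr mulr0 => <-.
  rewrite /G !(hornerXsubC, hornerD, hornerN, hornerM, hornerZ).
  by field; rewrite x_xi0 c0.
move/(congr1 (horner^~ xi)): G0.
rewrite /G /exc_form /kappa0 /kappa1 eta1 eta2.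
rewrite !(hornerXsubC, hornerD, hornerN, hornerM, hornerZ, hornerC, horner0).
rewrite subrr mul0r mulr0 !add0r => G_xi.
(* At xi the first summand of G vanishes, and the form is -c G.[xi]. *)
by rewrite -[RHS](mulr0 (- c)) -G_xi; ring.
Qed.

Lemma exc_form_size1_eq0 (R : idomainType) (k0 k1 xi : R) (y r : {poly R}) :
  (k0, k1) != (0, 0) -> size y = 2%N -> exc_form k0 k1 xi y = 0 ->
  (size r <= 1)%N -> exc_form k0 k1 xi r = 0 -> r = 0.
Proof.
move=> k_neq0 y2 exc_y /size1_polyC r_c.
have k0_neq0 : k0 != 0.
  apply: contra_neq k_neq0 => k00; move: exc_y.
  rewrite /exc_form horner_deriv_size2 ?y2 // k00 mul0r subr0 => /eqP.
  by rewrite mulf_eq0 (negPf (coef_size_pred_neq0 y2)) orbF => /eqP->.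
rewrite r_c exc_formC => /eqP; rewrite oppr_eq0 mulf_eq0 (negPf k0_neq0) /=.
by move=> /eqP->.
Qed.

Lemma exc_form_size2_scale (R : fieldType) (k0 k1 xi : R) (y r : {poly R}) :
  (k0, k1) != (0, 0) -> size y = 1%N -> exc_form k0 k1 xi y = 0 ->
  (size r <= 2)%N -> exc_form k0 k1 xi r = 0 -> r = (r`_0 / y`_0) *: y.
Proof.
move=> k_neq0 /eqP/size_poly1P[b b0 ->] exc_y r2.
have k00 : k0 = 0.
  by move/eqP: exc_y; rewrite exc_formC oppr_eq0 mulf_eq0 (negPf b0) orbF => /eqP.
have k1_neq0 : k1 != 0 by move: k_neq0; rewrite k00 xpair_eqE eqxx.
rewrite /exc_form k00 mul0r subr0 horner_deriv_size2 // => /eqP.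
rewrite mulf_eq0 (negPf k1_neq0) /= => /eqP r1.
by rewrite coefC /= scale_polyC divfK // -(size1_polyC (size_leq_of_coef0 r2 r1)).
Qed.

Section TriangularSpan.
Variables (R : realFieldType) (yh : nat -> {poly R}) (d n : nat).

Lemma in_En0 : in_En yh d n 0.
Proof. by exists (fun _ => 0); rewrite big1 // => j _; rewrite scale0r. Qed.

Lemma in_EnD P Q : in_En yh d n P -> in_En yh d n Q -> in_En yh d n (P + Q).
Proof.
move=> [a ->] [b ->]; exists (fun j => a j + b j).
by rewrite -big_split; apply: eq_bigr => j _; rewrite scalerDl.
Qed.

Lemma in_EnZ a P : in_En yh d n P -> in_En yh d n (a *: P).
Proof.
move=> [b ->]; exists (fun j => a * b j).
by rewrite scaler_sumr; apply: eq_bigr => j _; rewrite scalerA.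
Qed.

Lemma in_En_yh k : (k <= n)%N -> k != d -> in_En yh d n (yh k).
Proof.
rewrite -ltnS => kn kd; exists (fun j => (j == k)%:R).
rewrite (bigD1 (Ordinal kn)) //= eqxx scale1r big1 ?addr0 // => j /andP[_ jk].
by rewrite -val_eqE /= in jk; rewrite (negPf jk) scale0r.
Qed.

Hypothesis size_yh : forall j : nat, j != d -> size (yh j) = j.+1.

Lemma in_En_reduce k (P : {poly R}) : (k <= n)%N -> (size P <= k.+1)%N ->
  exists2 Q, in_En yh d n Q & (size (P - Q)%R <= d.+1)%N.
Proof.
elim: k P => [|k IH] P kn Pk.
  by exists 0; rewrite ?subr0 ?(leq_trans Pk) //; apply: in_En0.
have [kd | dk] := leqP k.+1 d.
  by exists 0; rewrite ?subr0 ?(leq_trans Pk) //; apply: in_En0.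
have kd : k.+1 != d by rewrite gtn_eqF.
have y_k := size_yh kd; set y := yh k.+1 in y_k *.
pose a := P`_k.+1 / y`_k.+1.
have Pk' : (size (P - a *: y)%R <= k.+1)%N.
  apply: size_leq_of_coef0.
    by rewrite (leq_trans (size_polyD _ _)) // geq_max Pk size_polyN -y_k size_scale_leq.
  by rewrite coefB coefZ divfK ?subrr ?coef_size_pred_neq0.
have [Q EQ PQ] := IH _ (ltnW kn) Pk'.
exists (Q + a *: y); first exact/in_EnD/in_EnZ/in_En_yh.
by rewrite opprD addrA addrAC.
Qed.

End TriangularSpan.

Theorem lemma4p1 (R : realFieldType) (p s eta : {poly R}) (xi : R)
  (d : nat) (yh : nat -> {poly R})
  (hp : (size p <= 3)%N) (hs : (size s <= 2)%N)
  (heta : size eta = 2%N) (hxi : root eta xi)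
  (hkappa : (kappa0 p s eta xi, kappa1 p eta xi) != (0, 0))
  (hd : (d <= 1)%N)
  (hy : forall j : nat, j != d ->
          size (yh j) = j.+1 /\ is_eigenfun p s eta (yh j)) :
  forall n : nat, (1 <= n)%N ->
    forall P : {poly R}, in_En yh d n P <-> in_Fn p s eta xi n P.
Proof.
move=> n n1 P; have [c c0 eta_c] := size2_root_scaleXsubC heta hxi.
set k0 := kappa0 p s eta xi in hkappa *; set k1 := kappa1 p eta xi in hkappa *.
have size_yh j (jd : j != d) : size (yh j) = j.+1 := (hy j jd).1.
have exc_yh j (jd : j != d) : exc_form k0 k1 xi (yh j) = 0 :=
  eigenfun_exc_form c0 eta_c (hy j jd).2.
have exc_En Q : in_En yh d n Q -> exc_form k0 k1 xi Q = 0.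
  by move=> [a ->]; rewrite linear_sum big1 // => j jd; rewrite linearZ /= exc_yh ?scaler0.
split=> [EP | [Pn exc_P]].
  split; last exact: exc_En.
  case: EP => a ->; rewrite (leq_trans (size_sum _ _ _)) //.
  by apply/bigmax_leqP => j jd; rewrite (leq_trans (size_scale_leq _ _)) ?size_yh.
have [Q EQ PQ] := in_En_reduce size_yh (leqnn n) Pn.
have exc_PQ : exc_form k0 k1 xi (P - Q) = 0 by rewrite linearB /= (exc_En _ EQ) subr0.
rewrite -(subrK Q P); apply: in_EnD EQ.
move: hd; rewrite leq_eqVlt ltnS leqn0 => /orP[/eqP d1 | /eqP d0]; subst d.
  rewrite (exc_form_size2_scale hkappa (size_yh 0%N isT) (exc_yh 0%N isT) PQ exc_PQ).
  exact/in_EnZ/in_En_yh.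
rewrite (exc_form_size1_eq0 hkappa (size_yh 1%N isT) (exc_yh 1%N isT) PQ exc_PQ).
exact: in_En0.
Qed.
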